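(* Let $n\ge 3$ and let $A_1A_2\dots A_n$ be a polygon in the Euclidean plane, with indices of vertices taken modulo $n$ (so $A_{n+1}=A_1$, etc.). Let $s,t$ be positive integers with $2s+t=n$, and let $M$ be a point of the plane distinct from all vertices $A_1,\dots,A_n$. Suppose that for every $i\in\{1,\dots,n\}$ and every $j\in\{i+s,i+s+1,\dots,i+s+t-1\}$ (indices mod $n$) the line $A_iM$ meets the line $A_jA_{j+1}$ in a single point $M_{ij}$, and that $M_{ij}\notin\{A_j,A_{j+1}\}$. Then $$\prod_{i=1}^{n}\ \prod_{j=i+s}^{i+s+t-1}\frac{\overline{M_{ij}A_j}}{\overline{M_{ij}A_{j+1}}}=(-1)^n .$$
   Context: For three collinear points $X,Y,Z$ with $X\neq Z$, $\frac{\overline{XY}}{\overline{XZ}}$ denotes the ratio of signed (directed) lengths along their common line: it equals $|XY|/|XZ|$ if $Y$ and $Z$ lie on the same side of $X$ on that line, and $-|XY|/|XZ|$ otherwise. *)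

From mathcomp Require Import all_boot all_order all_algebra.
Set Implicit Arguments. Unset Strict Implicit. Unset Printing Implicit Defensive.
Import Order.TTheory GRing.Theory Num.Theory.
Local Open Scope ring_scope.

Definition point (R : rcfType) := (R * R)%type.

(* X lies on the line through P and Q (for P <> Q this is exactly the line PQ):
   the cross product (Q - P) x (X - P) vanishes. *)
Definition on_line (R : rcfType) (P Q X : point R) : Prop :=
  (Q.1 - P.1) * (X.2 - P.2) - (Q.2 - P.2) * (X.1 - P.1) = 0.

Definition dot (R : rcfType) (U V : point R) : R := U.1 * V.1 + U.2 * V.2.

Definition vsub (R : rcfType) (U V : point R) : point R := (U.1 - V.1, U.2 - V.2).

Definition dist (R : rcfType) (X Y : point R) : R :=
  Num.sqrt ((Y.1 - X.1) ^+ 2 + (Y.2 - X.2) ^+ 2).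

(* Signed ratio  (XY-bar)/(XZ-bar)  for collinear X, Y, Z with X <> Z:
   |XY|/|XZ| if Y and Z lie on the same side of X on their common line
   (i.e. the vectors XY and XZ have positive dot product; if Y = X the
   value is 0 anyway), and -|XY|/|XZ| otherwise. *)
Definition sratio (R : rcfType) (X Y Z : point R) : R :=
  (if 0 < dot (vsub Y X) (vsub Z X) then 1 else -1) * (dist X Y / dist X Z).

(* Along the line A_i M every ratio is a ratio of signed areas:
   M_ij A_j / M_ij A_(j+1) = [A_i M A_j] / [A_i M A_(j+1)].  The inner product
   over j therefore telescopes to [A_i M A_(i+s)] / [A_i M A_(i+s+t)].  Since
   i+s+t = i-s (mod n), both numerator and denominator are, up to sign, values
   of h k = [M A_k A_(k+s)]: the inner product is -h i / h (i+s+t).  The outer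
   product over a full period of the n-periodic h is then (-1)^n. *)
From mathcomp Require Import all_boot all_order all_algebra ring zify.
Set Implicit Arguments. Unset Strict Implicit. Unset Printing Implicit Defensive.
Import Order.TTheory GRing.Theory Num.Theory.
Local Open Scope ring_scope.

Section PeriodicShift.

Variables (T : Type) (idx : T) (op : Monoid.com_law idx).

Lemma big_nat_periodic_shift1 (F : nat -> T) n :
  (forall k, F (k + n)%N = F k) ->
  \big[op/idx]_(1 <= i < n.+1) F i.+1 = \big[op/idx]_(1 <= i < n.+1) F i.
Proof.
case: n => [|n] Fper; first by rewrite !big_geq.
rewrite big_nat_recr // [RHS]big_nat_recl // Monoid.mulmC.
by rewrite -(Fper 1%N) add1n.
Qed.

Lemma big_nat_periodic_shift (F : nat -> T) n c :
  (forall k, F (k + n)%N = F k) ->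
  \big[op/idx]_(1 <= i < n.+1) F (i + c)%N = \big[op/idx]_(1 <= i < n.+1) F i.
Proof.
elim: c F => [|c IHc] F Fper; first by under eq_bigr do rewrite addn0.
rewrite -(IHc F Fper) -(@big_nat_periodic_shift1 (fun i => F (i + c)%N)).
  by under eq_bigr do rewrite addnS.
by move=> k; rewrite addnAC Fper.
Qed.

End PeriodicShift.

Section SignedArea.

Variable R : rcfType.
Implicit Types P Q X Y Z : point R.

(* Twice the signed area of the triangle PQX; on_line P Q X unfolds to area P Q X = 0. *)
Definition area P Q X : R :=
  (Q.1 - P.1) * (X.2 - P.2) - (Q.2 - P.2) * (X.1 - P.1).

Lemma area_rotate P Q X : area P Q X = area Q X P.
Proof. rewrite /area; ring. Qed.

Lemma area_swap P Q X : area P X Q = - area P Q X.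
Proof. rewrite /area; ring. Qed.

Lemma on_line_left X Y : on_line X Y X.
Proof. rewrite /on_line; ring. Qed.

Lemma on_line_right X Y : on_line X Y Y.
Proof. rewrite /on_line; ring. Qed.

Lemma area_affine P Q X Y Z mu :
  Y.1 - X.1 = mu * (Z.1 - X.1) -> Y.2 - X.2 = mu * (Z.2 - X.2) ->
  area P Q Y = (1 - mu) * area P Q X + mu * area P Q Z.
Proof.
rewrite /area => /eqP; rewrite subr_eq => /eqP-> /eqP; rewrite subr_eq => /eqP->.
ring.
Qed.

Lemma sqr_norm_sub_gt0 X Z : Z <> X -> 0 < (Z.1 - X.1) ^+ 2 + (Z.2 - X.2) ^+ 2.
Proof.
case: X Z => [x1 x2] [z1 z2] /= neqZX.
rewrite lt_def paddr_eq0 ?sqr_ge0 // !sqrf_eq0 !subr_eq0 addr_ge0 ?sqr_ge0 //.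
by rewrite andbT; apply/negP => /andP[/eqP e1 /eqP e2]; apply: neqZX; rewrite e1 e2.
Qed.

Lemma collinear_scale X Y Z : Z <> X -> on_line X Z Y ->
  exists mu, Y.1 - X.1 = mu * (Z.1 - X.1) /\ Y.2 - X.2 = mu * (Z.2 - X.2).
Proof.
move=> /sqr_norm_sub_gt0; set q := _ + _ => q_gt0 XZY.
pose d := (Y.1 - X.1) * (Z.1 - X.1) + (Y.2 - X.2) * (Z.2 - X.2).
have e1 : (Y.1 - X.1) * q - d * (Z.1 - X.1) = - (Z.2 - X.2) * area X Z Y.
  by rewrite /area /q /d; ring.
have e2 : (Y.2 - X.2) * q - d * (Z.2 - X.2) = (Z.1 - X.1) * area X Z Y.
  by rewrite /area /q /d; ring.
rewrite [area X Z Y]XZY mulr0 in e1; rewrite [area X Z Y]XZY mulr0 in e2.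
exists (d / q); split; apply: (mulIf (lt0r_neq0 q_gt0)).
  by rewrite mulrAC divfK ?lt0r_neq0 //; exact: subr0_eq e1.
by rewrite mulrAC divfK ?lt0r_neq0 //; exact: subr0_eq e2.
Qed.

Lemma sratio_scale X Y Z mu : Z <> X ->
  Y.1 - X.1 = mu * (Z.1 - X.1) -> Y.2 - X.2 = mu * (Z.2 - X.2) ->
  sratio X Y Z = mu.
Proof.
move=> /sqr_norm_sub_gt0; set q := _ + _ => q_gt0 eY1 eY2.
rewrite /sratio /dist /dot /vsub /= eY1 eY2 -/q.
have -> : (mu * (Z.1 - X.1)) ^+ 2 + (mu * (Z.2 - X.2)) ^+ 2 = mu ^+ 2 * q.
  by rewrite /q; ring.
have -> : mu * (Z.1 - X.1) * (Z.1 - X.1) + mu * (Z.2 - X.2) * (Z.2 - X.2) = mu * q.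
  by rewrite /q; ring.
rewrite sqrtrM ?sqr_ge0 // sqrtr_sqr -mulrA divff ?mulr1 ?gt_eqF ?sqrtr_gt0 //.
rewrite pmulr_lgt0 //; case: ltrP => [mu_gt0|mu_le0].
  by rewrite mul1r gtr0_norm.
by rewrite ler0_norm // mulN1r opprK.
Qed.

Lemma sratio_area P M X Y Z :
  on_line P M X -> on_line Y Z X -> X <> Z -> area P M Z != 0 ->
  sratio X Y Z = area P M Y / area P M Z.
Proof.
move=> PMX YZX neqXZ PMZ_neq0.
have XZY : on_line X Z Y.
  by rewrite /on_line -/(area X Z Y) area_swap area_rotate [area Y Z X]YZX oppr0.
have [mu [eY1 eY2]] := collinear_scale (nesym neqXZ) XZY.
rewrite (sratio_scale (nesym neqXZ) eY1 eY2) (area_affine P M eY1 eY2).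
by rewrite [area P M X]PMX mulr0 add0r mulfK.
Qed.

Lemma prod_sratio_transversal P M (B X : nat -> point R) a t :
  (0 < t)%N ->
  (forall j, (a <= j < a + t)%N ->
     [/\ on_line P M (X j), on_line (B j) (B j.+1) (X j) & X j <> B j.+1]) ->
  (forall j, (a <= j <= a + t)%N -> area P M (B j) != 0) ->
  \prod_(a <= j < a + t) sratio (X j) (B j) (B j.+1)
    = area P M (B a) / area P M (B (a + t)).
Proof.
move=> t_gt0 meets B_off.
apply: (telescope_prodr_eq (area P M \o B)).
- by rewrite -{1}(addn0 a) ltn_add2l.
- move=> k /andP[ak kat]; rewrite unitfE; apply: B_off.
  by rewrite (ltnW ak) (ltnW kat).
- move=> j /andP[aj jat]; have [PMX BBX neqXB] := meets j ltac:(by rewrite aj jat).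
  by apply: sratio_area => //; apply: B_off; rewrite (leq_trans aj) ?leqnSn.
Qed.


Lemma area_neq0_unique_meet P M Y Z W X :
  (forall Q, on_line P M Q -> on_line Y Z Q -> Q = X) -> on_line Y Z W -> X <> W ->
  area P M W != 0.
Proof. by move=> uniq_meet YZW neqXW; apply/eqP => PMW; apply/neqXW/esym/uniq_meet. Qed.

End SignedArea.

Theorem theorem1 (R : rcfType) (n s t : nat) (A : nat -> point R) (M : point R)
    (Mij : nat -> nat -> point R) :
  (3 <= n)%N ->
  (0 < s)%N -> (0 < t)%N -> (2 * s + t)%N = n ->
  (* indices of vertices taken modulo n *)
  (forall k, A (k + n)%N = A k) ->
  (* M is distinct from all vertices *)
  (forall k, A k <> M) ->
  (* for i in 1..n and j in i+s .. i+s+t-1, the lines A_i M and A_j A_{j+1}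
     meet in the single point Mij i j, which is neither A_j nor A_{j+1} *)
  (forall i j, (1 <= i <= n)%N -> (i + s <= j < i + s + t)%N ->
     [/\ on_line (A i) M (Mij i j),
         on_line (A j) (A j.+1) (Mij i j),
         (forall P, on_line (A i) M P -> on_line (A j) (A j.+1) P -> P = Mij i j),
         Mij i j <> A j & Mij i j <> A j.+1]) ->
  \prod_(1 <= i < n.+1) \prod_(i + s <= j < i + s + t)
      sratio (Mij i j) (A j) (A j.+1) = (-1) ^+ n.
Proof.
move=> _ s_gt0 t_gt0 def_n A_per _ meets.
have area_neq0 i j : (1 <= i <= n)%N -> (i + s <= j <= i + s + t)%N ->
    area (A i) M (A j) != 0.
  move=> i_n j_range; case: (ltnP j (i + s + t)) => [jst | tsj].
    have [_ _ uniq_meet neqMA _] := meets i j i_n ltac:(lia).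
    exact: area_neq0_unique_meet uniq_meet (on_line_left _ _) neqMA.
  have [_ _ uniq_meet _ neqMA] := meets i j.-1 i_n ltac:(lia).
  rewrite (_ : j = j.-1.+1); last by lia.
  exact: area_neq0_unique_meet uniq_meet (on_line_right _ _) neqMA.
pose h k := area M (A k) (A (k + s)%N).
have h_per k : h (k + n)%N = h k by rewrite /h addnAC !A_per.
have row i : (1 <= i < n.+1)%N ->
    \prod_(i + s <= j < i + s + t) sratio (Mij i j) (A j) (A j.+1)
      = -1 * h i / h (i + (s + t))%N.
  move=> i_n; rewrite ltnS in i_n.
  rewrite (prod_sratio_transversal (P := A i) (M := M)) //.
  - rewrite mulN1r /h area_rotate area_swap; congr (- _ / _).
    have -> : (i + (s + t) + s = i + n)%N by rewrite -def_n; lia.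
    by rewrite A_per addnA area_rotate.
  - by move=> j /(meets i j i_n)[].
  - by move=> j; apply: area_neq0.
have h_neq0 : \prod_(1 <= i < n.+1) h i != 0.
  rewrite prodf_seq_neq0; apply/allP => i; rewrite mem_index_iota ltnS => i_n.
  by rewrite /h -oppr_eq0 -area_swap -area_rotate area_neq0 //; lia.
rewrite (eq_big_nat _ _ row) prodf_div big_split prodr_const_nat subn1 /=.
by rewrite (big_nat_periodic_shift _ _ h_per) mulfK.
Qed.
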